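(* Let $(X,d)$ be a metric space and $A\subset X$ a subset. Let $\{\sigma_{xy}\}_{x,y\in A}$ be a collection of geodesics $\sigma_{xy}\colon[0,1]\to X$ (i.e. $d(\sigma_{xy}(s),\sigma_{xy}(t))=|s-t|\,d(x,y)$) such that $\sigma_{xy}(0)=x$, $\sigma_{xy}(1)=y$, and $\sigma_{xy}(t)=\sigma_{yx}(1-t)$ for all $t\in[0,1]$ and $x,y\in A$. If \[ d(\sigma_{xy}(t),\sigma_{xz}(t))\le t\,d(y,z) \] for all $x,y,z\in A$ and $t\in[0,1]$, then \[ d(\sigma_{x_1x_2}(t),\sigma_{y_1y_2}(t))\le W_1\big((1-t)\delta_{x_1}+t\delta_{x_2},\,(1-t)\delta_{y_1}+t\delta_{y_2}\big) \] for all $t\in[0,1]$ and $x_1,x_2,y_1,y_2\in A$.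
   Context: For Radon probability measures $\mu,\nu$ on $X$, the first Wasserstein distance is $W_1(\mu,\nu)=\inf_{\gamma}\int_{X\times X}d(x,y)\,d\gamma(x,y)$, the infimum over all couplings $\gamma$ of $(\mu,\nu)$ (probability measures on $X\times X$ with marginals $\mu$ and $\nu$). $\delta_x$ is the Dirac measure at $x$. *)

From Stdlib Require Import Reals Lra List ClassicalEpsilon.
From Coquelicot Require Import Coquelicot.
Open Scope R_scope.

Definition is_metric {X : Type} (d : X -> X -> R) : Prop :=
  (forall x y, 0 <= d x y) /\
  (forall x y, d x y = 0 <-> x = y) /\
  (forall x y, d x y = d y x) /\
  (forall x y z, d x z <= d x y + d y z).

Definition eqR {X : Type} (x y : X) : R :=
  if excluded_middle_informative (x = y) then 1 else 0.

(** Finitely supported (discrete) measures on X, written as finite sums of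
    weighted Dirac masses  sum_i w_i delta_{p_i} , given as a list of (p_i, w_i). *)
Definition dmeasure (X : Type) := list (X * R).

Definition mass {X : Type} (mu : dmeasure X) (z : X) : R :=
  fold_right (fun pw acc => snd pw * eqR (fst pw) z + acc) 0 mu.

Definition two_point {X : Type} (t : R) (a b : X) : dmeasure X :=
  (a, 1 - t) :: (b, t) :: nil.

Definition is_coupling {X : Type} (mu nu : dmeasure X)
    (gamma : list ((X * X) * R)) : Prop :=
  (forall e, In e gamma -> 0 <= snd e) /\
  (forall z, fold_right (fun e acc => snd e * eqR (fst (fst e)) z + acc) 0 gamma
             = mass mu z) /\
  (forall z, fold_right (fun e acc => snd e * eqR (snd (fst e)) z + acc) 0 gamma
             = mass nu z).

Definition cost {X : Type} (d : X -> X -> R) (gamma : list ((X * X) * R)) : R :=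
  fold_right (fun e acc => snd e * d (fst (fst e)) (snd (fst e)) + acc) 0 gamma.

Definition W1 {X : Type} (d : X -> X -> R) (mu nu : dmeasure X) : Rbar :=
  Glb_Rbar (fun c => exists gamma, is_coupling mu nu gamma /\ c = cost d gamma).

Definition is_geodesic {X : Type} (d : X -> X -> R) (x y : X) (s : R -> X) : Prop :=
  s 0 = x /\ s 1 = y /\
  (forall u v, 0 <= u <= 1 -> 0 <= v <= 1 -> d (s u) (s v) = Rabs (u - v) * d x y).

(* Kantorovich weak duality: if alpha x + beta y <= d x y on the supports of mu and nu,
   every coupling of mu and nu costs at least int alpha dmu + int beta dnu. Between two
   two-point measures the optimal plan is either the synchronous one, of cost
   (1-t) d(x1,y1) + t d(x2,y2), or, when d(x1,y2) + d(x2,y1) < d(x1,y1) + d(x2,y2),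
   the plan moving mass min(t, 1-t) crosswise; each is certified by explicit potentials.
   The contraction hypothesis bounds d(sigma_x1x2(t), sigma_y1y2(t)) by the same values:
   through sigma_x1y2(t) in the synchronous case, and through
   sigma_x1y1(t) = sigma_y1x1(1-t) and sigma_y1x1(t) in the crossed case with t <= 1/2;
   t >= 1/2 follows by reversing both geodesics. *)

From Stdlib Require Import Reals Lra List ClassicalEpsilon FunctionalExtensionality.
From Coquelicot Require Import Coquelicot.
Open Scope R_scope.

(* [mass mu z], the marginals in [is_coupling] and [cost] are [dintegral] up to
   conversion. *)
Definition dintegral {X : Type} (mu : dmeasure X) (f : X -> R) : R :=
  fold_right (fun pw acc => snd pw * f (fst pw) + acc) 0 mu.

Definition dpush {X Y : Type} (g : X -> Y) (mu : dmeasure X) : dmeasure Y :=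
  map (fun pw => (g (fst pw), snd pw)) mu.

Definition sum_list {X : Type} (S : list X) (g : X -> R) : R :=
  fold_right (fun z acc => g z + acc) 0 S.

Section DiscreteIntegral.
Context {X : Type}.

Lemma eqR_refl (x : X) : eqR x x = 1.
Proof. unfold eqR; destruct (excluded_middle_informative (x = x)); congruence. Qed.

Lemma eqR_neq (x y : X) : x <> y -> eqR x y = 0.
Proof. unfold eqR; destruct (excluded_middle_informative (x = y)); congruence. Qed.

Lemma eqR_ge0 (x y : X) : 0 <= eqR x y.
Proof. unfold eqR; destruct (excluded_middle_informative (x = y)); lra. Qed.

Lemma sum_list_eqR_notin (S : list X) (f : X -> R) p :
  ~ In p S -> sum_list S (fun z => f z * eqR p z) = 0.
Proof.
  induction S as [|q S IH]; simpl; intros Hp; [reflexivity|].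
  rewrite eqR_neq by (intros ->; tauto).
  rewrite IH by tauto; ring.
Qed.

Lemma sum_list_eqR (S : list X) (f : X -> R) p :
  NoDup S -> In p S -> sum_list S (fun z => f z * eqR p z) = f p.
Proof.
  intros HS. induction HS as [|q S HqS HS IH]; simpl; [tauto|].
  intros [<- | Hp].
  - rewrite eqR_refl, sum_list_eqR_notin by assumption; ring.
  - rewrite eqR_neq, IH by (try assumption; congruence); ring.
Qed.

Lemma dintegral_sum_mass (mu : dmeasure X) (S : list X) (f : X -> R) :
  NoDup S -> incl (map fst mu) S ->
  dintegral mu f = sum_list S (fun z => f z * mass mu z).
Proof.
  intros HS. induction mu as [|[p w] mu IH]; simpl; intros Hincl.
  - clear. induction S as [|z S IHS]; simpl; [reflexivity|].
    change (mass nil z) with 0; rewrite <- IHS; ring.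
  - assert (Hp : In p S) by (apply Hincl; left; reflexivity).
    rewrite IH by (intros z Hz; apply Hincl; right; exact Hz).
    rewrite <- (sum_list_eqR S f p HS Hp).
    clear. induction S as [|z S IHS]; simpl; [ring|].
    rewrite <- IHS; unfold mass; simpl; ring.
Qed.

Lemma dintegral_mass_ext (mu nu : dmeasure X) (f : X -> R) :
  (forall z, mass mu z = mass nu z) -> dintegral mu f = dintegral nu f.
Proof.
  intros Hmass.
  set (dec := fun x y : X => excluded_middle_informative (x = y)).
  set (S := nodup dec (map fst (mu ++ nu))).
  assert (HS : NoDup S) by apply NoDup_nodup.
  assert (Hmu : incl (map fst mu) S).
  { intros z Hz; apply nodup_In; rewrite map_app; apply in_or_app; now left. }
  assert (Hnu : incl (map fst nu) S).
  { intros z Hz; apply nodup_In; rewrite map_app; apply in_or_app; now right. }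
  rewrite (dintegral_sum_mass mu S), (dintegral_sum_mass nu S) by assumption.
  f_equal; extensionality z; now rewrite Hmass.
Qed.

Lemma dintegral_plus (mu : dmeasure X) (f g : X -> R) :
  dintegral mu (fun x => f x + g x) = dintegral mu f + dintegral mu g.
Proof. induction mu as [|pw mu IH]; simpl; [ring|]. rewrite IH; ring. Qed.

Lemma dintegral_le (mu : dmeasure X) (f g : X -> R) :
  (forall pw, In pw mu -> snd pw * f (fst pw) <= snd pw * g (fst pw)) ->
  dintegral mu f <= dintegral mu g.
Proof.
  induction mu as [|pw mu IH]; simpl; intros Hle; [lra|].
  pose proof (Hle pw (or_introl eq_refl)).
  assert (dintegral mu f <= dintegral mu g) by auto with datatypes.
  unfold dintegral in *; lra.
Qed.

Lemma dintegral_ge0 (mu : dmeasure X) (f : X -> R) :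
  (forall pw, In pw mu -> 0 <= snd pw) -> (forall x, 0 <= f x) ->
  0 <= dintegral mu f.
Proof.
  intros Hw Hf. induction mu as [|pw mu IH]; simpl; [lra|].
  assert (0 <= snd pw * f (fst pw)) by (apply Rmult_le_pos; auto with datatypes).
  assert (0 <= dintegral mu f) by (apply IH; intros; apply Hw; now right).
  unfold dintegral in *; lra.
Qed.

Lemma dintegral_ge_entry (mu : dmeasure X) (f : X -> R) pw :
  (forall qw, In qw mu -> 0 <= snd qw) -> (forall x, 0 <= f x) ->
  In pw mu -> snd pw * f (fst pw) <= dintegral mu f.
Proof.
  intros Hw Hf. induction mu as [|qw mu IH]; simpl; [tauto|].
  assert (0 <= snd qw * f (fst qw)) by (apply Rmult_le_pos; auto with datatypes).
  assert (Hw' : forall rw, In rw mu -> 0 <= snd rw) by (intros; apply Hw; now right).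
  assert (0 <= dintegral mu f) by (apply dintegral_ge0; auto).
  intros [<- | Hin]; [unfold dintegral in *; lra|].
  assert (snd pw * f (fst pw) <= dintegral mu f) by auto.
  unfold dintegral in *; lra.
Qed.

End DiscreteIntegral.

Lemma dintegral_push {X Y : Type} (g : X -> Y) (mu : dmeasure X) (f : Y -> R) :
  dintegral (dpush g mu) f = dintegral mu (fun x => f (g x)).
Proof. induction mu as [|pw mu IH]; simpl; congruence. Qed.

Lemma mass_dpush {X Y : Type} (g : X -> Y) (mu : dmeasure X) (z : Y) :
  mass (dpush g mu) z = dintegral mu (fun x => eqR (g x) z).
Proof. exact (dintegral_push g mu (fun y => eqR y z)). Qed.

Section Couplings.
Context {X : Type} (mu nu : dmeasure X) (gamma : dmeasure (X * X)).
Hypothesis gamma_coupling : is_coupling mu nu gamma.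

Lemma coupling_dintegral_fst (f : X -> R) :
  dintegral gamma (fun xy => f (fst xy)) = dintegral mu f.
Proof.
  rewrite <- dintegral_push. apply dintegral_mass_ext. intros z.
  destruct gamma_coupling as (_ & Hfst & _).
  rewrite mass_dpush; apply Hfst.
Qed.

Lemma coupling_dintegral_snd (f : X -> R) :
  dintegral gamma (fun xy => f (snd xy)) = dintegral nu f.
Proof.
  rewrite <- dintegral_push. apply dintegral_mass_ext. intros z.
  destruct gamma_coupling as (_ & _ & Hsnd).
  rewrite mass_dpush; apply Hsnd.
Qed.

Lemma coupling_support pw :
  In pw gamma -> 0 < snd pw ->
  0 < mass mu (fst (fst pw)) /\ 0 < mass nu (snd (fst pw)).
Proof.
  destruct gamma_coupling as (Hw & Hfst & Hsnd). intros Hin Hpos.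
  assert (Hentry : forall g : X * X -> X,
             snd pw <= dintegral gamma (fun xy => eqR (g xy) (g (fst pw)))).
  { intros g.
    pose proof (dintegral_ge_entry gamma (fun xy => eqR (g xy) (g (fst pw))) pw
                  Hw (fun _ => eqR_ge0 _ _) Hin) as H.
    simpl in H; rewrite eqR_refl in H; lra. }
  split; [rewrite <- Hfst | rewrite <- Hsnd]; apply (Rlt_le_trans _ _ _ Hpos);
    [exact (Hentry fst) | exact (Hentry snd)].
Qed.

Lemma cost_ge_potentials (c : X -> X -> R) (alpha beta : X -> R) :
  (forall x y, 0 < mass mu x -> 0 < mass nu y -> alpha x + beta y <= c x y) ->
  dintegral mu alpha + dintegral nu beta <= cost c gamma.
Proof.
  intros Hpot.
  rewrite <- coupling_dintegral_fst, <- coupling_dintegral_snd, <- dintegral_plus.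
  apply (dintegral_le gamma _ (fun xy => c (fst xy) (snd xy))). intros pw Hin.
  destruct gamma_coupling as (Hw & _).
  destruct (Req_dec (snd pw) 0) as [-> | Hnz]; [lra|].
  assert (Hpos : 0 < snd pw) by (specialize (Hw pw Hin); lra).
  destruct (coupling_support pw Hin Hpos).
  apply Rmult_le_compat_l; [lra | auto].
Qed.

End Couplings.

Lemma W1_ge_potentials {X : Type} (c : X -> X -> R) (mu nu : dmeasure X)
    (alpha beta : X -> R) :
  (forall x y, 0 < mass mu x -> 0 < mass nu y -> alpha x + beta y <= c x y) ->
  Rbar_le (dintegral mu alpha + dintegral nu beta) (W1 c mu nu).
Proof.
  intros Hpot. apply Glb_Rbar_correct. intros v (gamma & Hgamma & ->).
  exact (cost_ge_potentials mu nu gamma Hgamma c alpha beta Hpot).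
Qed.

Lemma dintegral_two_point {X : Type} (t : R) (a b : X) (f : X -> R) :
  dintegral (two_point t a b) f = (1 - t) * f a + t * f b.
Proof. simpl; ring. Qed.

Lemma two_point_support {X : Type} (t : R) (a b z : X) :
  0 < mass (two_point t a b) z -> z = a \/ z = b.
Proof.
  intros Hz.
  destruct (excluded_middle_informative (z = a)) as [| Hza]; [now left|].
  destruct (excluded_middle_informative (z = b)) as [| Hzb]; [now right|].
  unfold mass in Hz; simpl in Hz.
  rewrite !eqR_neq in Hz by congruence. lra.
Qed.

Lemma W1_two_point_ge_potentials {X : Type} (c : X -> X -> R) (t : R)
    (x1 x2 y1 y2 : X) (alpha beta : X -> R) (v : R) :
  (forall x y, (x = x1 \/ x = x2) -> (y = y1 \/ y = y2) -> alpha x + beta y <= c x y) ->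
  v <= (1 - t) * alpha x1 + t * alpha x2 + ((1 - t) * beta y1 + t * beta y2) ->
  Rbar_le v (W1 c (two_point t x1 x2) (two_point t y1 y2)).
Proof.
  intros Hpot Hv. rewrite <- !dintegral_two_point in Hv.
  apply (Rbar_le_trans _ (Finite (dintegral (two_point t x1 x2) alpha
                                    + dintegral (two_point t y1 y2) beta)));
    [exact Hv | apply W1_ge_potentials].
  intros x y Hx Hy.
  apply Hpot; eapply two_point_support; eassumption.
Qed.

Section GeodesicBounds.
Context {X : Type} (d : X -> X -> R) (A : X -> Prop) (sigma : X -> X -> R -> X).
Hypothesis d_sym : forall x y, d x y = d y x.
Hypothesis d_triangle : forall x y z, d x z <= d x y + d y z.
Hypothesis sigma_geodesic : forall x y, A x -> A y -> is_geodesic d x y (sigma x y).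
Hypothesis sigma_rev : forall x y t, A x -> A y -> 0 <= t <= 1 ->
  sigma x y t = sigma y x (1 - t).
Hypothesis sigma_contract : forall x y z t, A x -> A y -> A z -> 0 <= t <= 1 ->
  d (sigma x y t) (sigma x z t) <= t * d y z.

Lemma sigma_synchronous_le t x1 x2 y1 y2 :
  0 <= t <= 1 -> A x1 -> A x2 -> A y1 -> A y2 ->
  d (sigma x1 x2 t) (sigma y1 y2 t) <= (1 - t) * d x1 y1 + t * d x2 y2.
Proof.
  intros Ht A1 A2 B1 B2.
  assert (Ht' : 0 <= 1 - t <= 1) by lra.
  pose proof (sigma_contract x1 x2 y2 t A1 A2 B2 Ht).
  pose proof (sigma_contract y2 x1 y1 (1 - t) B2 A1 B1 Ht').
  rewrite <- (sigma_rev x1 y2 t), <- (sigma_rev y1 y2 t) in * by assumption.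
  pose proof (d_triangle (sigma x1 x2 t) (sigma x1 y2 t) (sigma y1 y2 t)).
  lra.
Qed.

Lemma sigma_crossed_le t x1 x2 y1 y2 :
  0 <= t <= 1 / 2 -> A x1 -> A x2 -> A y1 -> A y2 ->
  d (sigma x1 x2 t) (sigma y1 y2 t) <= (1 - 2 * t) * d x1 y1 + t * d x2 y1 + t * d x1 y2.
Proof.
  intros Ht A1 A2 B1 B2.
  assert (Ht1 : 0 <= t <= 1) by lra.
  assert (Ht' : 0 <= 1 - t <= 1) by lra.
  pose proof (sigma_contract x1 x2 y1 t A1 A2 B1 Ht1).
  pose proof (sigma_contract y1 x1 y2 t B1 A1 B2 Ht1).
  destruct (sigma_geodesic y1 x1 B1 A1) as (_ & _ & Hspeed).
  pose proof (Hspeed (1 - t) t Ht' Ht1) as Hmid.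
  rewrite Rabs_pos_eq, (d_sym y1 x1) in Hmid by lra.
  rewrite (sigma_rev x1 y1 t) in * by assumption.
  pose proof (d_triangle (sigma x1 x2 t) (sigma y1 x1 (1 - t)) (sigma y1 y2 t)).
  pose proof (d_triangle (sigma y1 x1 (1 - t)) (sigma y1 x1 t) (sigma y1 y2 t)).
  lra.
Qed.

End GeodesicBounds.

Theorem lemma3p1 (X : Type) (d : X -> X -> R) (hd : is_metric d)
  (A : X -> Prop) (sigma : X -> X -> R -> X)
  (hgeo : forall x y, A x -> A y -> is_geodesic d x y (sigma x y))
  (hsym : forall x y t, A x -> A y -> 0 <= t <= 1 ->
            sigma x y t = sigma y x (1 - t))
  (hcontr : forall x y z t, A x -> A y -> A z -> 0 <= t <= 1 ->
            d (sigma x y t) (sigma x z t) <= t * d y z) :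
  forall t x1 x2 y1 y2, 0 <= t <= 1 -> A x1 -> A x2 -> A y1 -> A y2 ->
    Rbar_le (Finite (d (sigma x1 x2 t) (sigma y1 y2 t)))
            (W1 d (two_point t x1 x2) (two_point t y1 y2)).
Proof.
  destruct hd as (_ & _ & d_sym & d_triangle).
  intros t x1 x2 y1 y2 Ht A1 A2 B1 B2.
  destruct (Rle_dec (d x1 y1 + d x2 y2) (d x1 y2 + d x2 y1)) as [Hsync | Hcross].
  - apply (W1_two_point_ge_potentials d t x1 x2 y1 y2
             (fun x => d x y2 - d x1 y2) (fun y => d x1 y)).
    + intros x y [-> | ->] [-> | ->]; lra.
    + pose proof (sigma_synchronous_le d A sigma d_triangle hsym hcontr
                    t x1 x2 y1 y2 Ht A1 A2 B1 B2).
      lra.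
  - apply Rnot_le_lt in Hcross.
    destruct (Rle_dec t (1 / 2)) as [Hlow | Hhigh].
    + apply (W1_two_point_ge_potentials d t x1 x2 y1 y2
               (fun x => d x y1 - d x1 y1) (fun y => d x1 y)).
      * intros x y [-> | ->] [-> | ->]; lra.
      * pose proof (sigma_crossed_le d A sigma d_sym d_triangle hgeo hsym hcontr
                      t x1 x2 y1 y2 ltac:(lra) A1 A2 B1 B2).
        lra.
    + apply (W1_two_point_ge_potentials d t x1 x2 y1 y2
               (fun x => d x y2 - d x2 y2) (fun y => d x2 y)).
      * intros x y [-> | ->] [-> | ->]; lra.
      * pose proof (sigma_crossed_le d A sigma d_sym d_triangle hgeo hsym hcontr
                      (1 - t) x2 x1 y2 y1 ltac:(lra) A2 A1 B2 B1).
        rewrite (hsym x1 x2 t), (hsym y1 y2 t) by assumption.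
        lra.
Qed.
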